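(* Let $m\ge 2$, $1\le\ell<m$, and let $\mathcal{R}$ be the positional scoring rule with scoring function $\lambda(i)=\alpha_i$, where $\alpha_1\ge\alpha_2\ge\dots\ge\alpha_m=0$ and $\alpha_1>0$. Then the optimal truncated-ballot algorithm (described in the context) is, for $\ell$-truncated elections, an approximation algorithm for $\mathcal{R}$ with approximation ratio $$\frac{\sum_{i=1}^{\ell}\alpha_i}{m\,\alpha_{\ell+1}+\frac{\alpha_1-\alpha_{\ell+1}}{\alpha_1}\sum_{i=1}^{\ell}\alpha_i};$$ that is, for every election $E$ (with full rankings), if $w$ is the candidate returned by the algorithm on the $\ell$-truncation of $E$, then $\mathrm{sc}_\lambda(w)/\max_{c\in C}\mathrm{sc}_\lambda(c)$ is at least this quantity.
   Context: An election consists of a set $V$ of $n$ voters and a set $C$ of $m$ candidates; each voter $v$ has a strict linear order over $C$, and $\mathrm{pos}_v(c)$ is the position of $c$ (1 = top). The $\lambda$-score is $\mathrm{sc}_\lambda(c)=\sum_{v}\lambda(\mathrm{pos}_v(c))$. The $\ell$-truncation of $E$ reveals, for each voter, only her top $\ell$ candidates in order. Let $\mathrm{occ}(c)$ be the number of voters ranking $c$ among their top $\ell$, and $T(c)=\sum_{v:\,\mathrm{pos}_v(c)\le\ell}\alpha_{\mathrm{pos}_v(c)}$. Define $\mathrm{worst}(c)=T(c)+(n-\mathrm{occ}(c))\alpha_m$ (score when $c$ is placed last by every voter not ranking it in the top $\ell$) and $\mathrm{best}(c)=T(c)+(n-\mathrm{occ}(c))\alpha_{\ell+1}$ (score when $c$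 is placed at position $\ell+1$ by every such voter). Optimal truncated-ballot algorithm: let $a$ be a candidate with highest $\mathrm{worst}$ score, $b_1$ a candidate with highest $\mathrm{best}$ score and $b_2$ a candidate with the highest $\mathrm{best}$ score among $C\setminus\{b_1\}$; return $a$ if $\mathrm{worst}(a)/\mathrm{best}(b_1)\ge\mathrm{worst}(b_1)/\mathrm{best}(b_2)$, and $b_1$ otherwise. *)

From HB Require Import structures.
From mathcomp Require Import all_boot all_order all_algebra all_fingroup.
Set Implicit Arguments. Unset Strict Implicit. Unset Printing Implicit Defensive.
Import Order.TTheory GRing.Theory Num.Theory.
Local Open Scope ring_scope.

(* An election with n voters ('I_n) and m candidates ('I_m): voter v's strict
   linear order is the bijection (E v) : 'I_m -> 'I_m sending a candidate to its
   0-based rank; pos E v c is the 1-based position (1 = top).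
   The scoring vector alpha : nat -> R is indexed 1..m (alpha i = alpha_i). *)

Definition pos (n m : nat) (E : 'I_n -> {perm 'I_m}) (v : 'I_n) (c : 'I_m) : nat :=
  (E v c : nat).+1.

Definition score {R : realFieldType} (n m : nat) (alpha : nat -> R)
  (E : 'I_n -> {perm 'I_m}) (c : 'I_m) : R :=
  \sum_(v : 'I_n) alpha (pos E v c).

(* maximum score over all candidates (scores are nonnegative) *)
Definition max_score {R : realFieldType} (n m : nat) (alpha : nat -> R)
  (E : 'I_n -> {perm 'I_m}) : R :=
  \big[Num.max/0]_(c : 'I_m) score alpha E c.

(* data visible in the l-truncation *)
Definition occ (n m : nat) (l : nat) (E : 'I_n -> {perm 'I_m}) (c : 'I_m) : nat :=
  #|[set v : 'I_n | (pos E v c <= l)%N]|.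

Definition Tsc {R : realFieldType} (n m : nat) (alpha : nat -> R) (l : nat)
  (E : 'I_n -> {perm 'I_m}) (c : 'I_m) : R :=
  \sum_(v : 'I_n | (pos E v c <= l)%N) alpha (pos E v c).

Definition worst {R : realFieldType} (n m : nat) (alpha : nat -> R) (l : nat)
  (E : 'I_n -> {perm 'I_m}) (c : 'I_m) : R :=
  Tsc alpha l E c + (n - occ l E c)%:R * alpha m.

Definition best {R : realFieldType} (n m : nat) (alpha : nat -> R) (l : nat)
  (E : 'I_n -> {perm 'I_m}) (c : 'I_m) : R :=
  Tsc alpha l E c + (n - occ l E c)%:R * alpha l.+1.

(* w is a possible output of the optimal truncated-ballot algorithm
   (for any tie-breaking in the choice of a, b1, b2). *)
Definition alg_output {R : realFieldType} (n m : nat) (alpha : nat -> R) (l : nat)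
  (E : 'I_n -> {perm 'I_m}) (w : 'I_m) : Prop :=
  exists a b1 b2 : 'I_m,
    (forall c, worst alpha l E c <= worst alpha l E a) /\
    (forall c, best alpha l E c <= best alpha l E b1) /\
    b2 != b1 /\
    (forall c, c != b1 -> best alpha l E c <= best alpha l E b2) /\
    w = (if worst alpha l E b1 / best alpha l E b2
            <= worst alpha l E a / best alpha l E b1
         then a else b1).

Definition approx_ratio {R : realFieldType} (m : nat) (alpha : nat -> R) (l : nat) : R :=
  (\sum_(1 <= i < l.+1) alpha i) /
  (m%:R * alpha l.+1 + (alpha 1%N - alpha l.+1) / alpha 1%N * \sum_(1 <= i < l.+1) alpha i).

Set Warnings "-notation-overridden,-ambiguous-paths".
From HB Require Import structures.
From mathcomp Require Import all_boot all_order all_algebra all_fingroup.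
From mathcomp Require Import ring lra.
Import Order.TTheory GRing.Theory Num.Theory.
Set Implicit Arguments. Unset Strict Implicit. Unset Printing Implicit Defensive.
Local Open Scope ring_scope.

(* Let a maximize the revealed score Tsc (which equals worst, as alpha_m = 0) and
   b1 maximize best.  Every true score lies between Tsc and best, so the optimum
   is at most best b1; and since each voter reveals exactly the positions 1..l,
   the revealed scores sum to n S (S = alpha_1 + ... + alpha_l), whence
   Tsc a >= n S / m.  Moreover occ c >= Tsc c / alpha_1, so
   best c <= Tsc c + (n - Tsc c / alpha_1) alpha_(l+1) is affine in Tsc c.
   Combining the two bounds gives approx_ratio <= Tsc a / best b1, which the
   output a achieves.  The output is b1 only if Tsc b1 / best b2 is larger, and
   then either b1 is itself optimal or the optimum is at most best b2. *)

Lemma ler_pdiv (R : realFieldType) (x y z w : R) :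
  0 <= x -> x <= y -> 0 < z -> z <= w -> x / w <= y / z.
Proof.
move=> x_ge0 le_xy z_gt0 le_zw; have w_gt0 := lt_le_trans z_gt0 le_zw.
by rewrite ler_pM // ?invr_ge0 ?lef_pV2 ?posrE // ltW.
Qed.

Section TruncatedBallots.

Variables (R : realFieldType) (n m l : nat) (alpha : nat -> R).
Variable E : 'I_n -> {perm 'I_m}.
Hypothesis alpha_nonincr :
  forall i : nat, (1 <= i)%N -> (i < m)%N -> alpha i.+1 <= alpha i.
Hypothesis alpha_m : alpha m = 0.
Hypothesis lt_l_m : (l < m)%N.

Local Notation T := (Tsc alpha l E).
Local Notation B := (best alpha l E).
Local Notation sc := (score alpha E).
Local Notation M := (max_score alpha E).
Local Notation S := (\sum_(1 <= i < l.+1) alpha i).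

Lemma alpha_le i j : (1 <= i)%N -> (i <= j)%N -> (j <= m)%N -> alpha j <= alpha i.
Proof.
move=> i_ge1; elim: j => [|j IHj]; first by rewrite leqn0 => /eqP i0; rewrite i0 in i_ge1.
rewrite leq_eqVlt ltnS => /orP[/eqP-> //|le_ij] lt_jm.
apply: le_trans (IHj le_ij (ltnW lt_jm)).
exact: alpha_nonincr (leq_trans i_ge1 le_ij) lt_jm.
Qed.

Lemma alpha_ge0 j : (1 <= j)%N -> (j <= m)%N -> 0 <= alpha j.
Proof. by move=> j_ge1 le_jm; rewrite -alpha_m alpha_le. Qed.

Lemma pos_range v c : (1 <= pos E v c <= m)%N.
Proof. by rewrite /pos ltn_ord. Qed.

Lemma alpha_pos_ge0 v c : 0 <= alpha (pos E v c).
Proof. by have /andP[? ?] := pos_range v c; apply: alpha_ge0. Qed.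

Lemma worstE c : worst alpha l E c = T c.
Proof. by rewrite /worst alpha_m mulr0 addr0. Qed.

Lemma Tsc_ge0 c : 0 <= T c.
Proof. by apply: sumr_ge0 => v _; apply: alpha_pos_ge0. Qed.

Lemma Tsc_le_occ c : T c <= (occ l E c)%:R * alpha 1.
Proof.
rewrite /Tsc /occ mulr_natl -sumr_const.
rewrite [X in _ <= X](eq_bigl (fun v => (pos E v c <= l)%N)) => [|v]; last by rewrite inE.
by apply: ler_sum => v _; have /andP[? ?] := pos_range v c; apply: alpha_le.
Qed.

Lemma n_sub_occE c : (n - occ l E c)%N = #|[pred v | ~~ (pos E v c <= l)%N]|.
Proof.
have := cardsC [set v | (pos E v c <= l)%N]; rewrite card_ord => n_split.
rewrite /occ -[X in (X - _)%N]n_split addKn.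
by apply: eq_card => v; rewrite !inE.
Qed.

Lemma Tsc_le_score c : T c <= sc c.
Proof.
rewrite /score (bigID (fun v => (pos E v c <= l)%N)) lerDl.
by apply: sumr_ge0 => v _; apply: alpha_pos_ge0.
Qed.

Lemma score_ge0 c : 0 <= sc c.
Proof. exact: le_trans (Tsc_ge0 c) (Tsc_le_score c). Qed.

Lemma score_le_best c : sc c <= B c.
Proof.
rewrite /score /best (bigID (fun v => (pos E v c <= l)%N)) lerD2l.
rewrite n_sub_occE mulr_natl -sumr_const.
apply: ler_sum => v; rewrite -ltnNge => lt_lpos.
by have /andP[_ ?] := pos_range v c; apply: alpha_le.
Qed.

Lemma Tsc_le_best c : T c <= B c.
Proof. exact: le_trans (Tsc_le_score c) (score_le_best c). Qed.

Lemma sum_Tsc : \sum_(c : 'I_m) T c = n%:R * S.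
Proof.
under eq_bigr do rewrite /Tsc big_mkcond.
rewrite exchange_big mulr_natl -[n in _ *+ n]card_ord -sumr_const /=.
apply: eq_bigr => v _.
rewrite (reindex_inj (@perm_inj _ (E v)^-1)) /= /pos.
under eq_bigr do rewrite permKV.
rewrite -big_mkcond /= big_add1 /= big_mkord.
by rewrite (big_ord_widen m (fun i => alpha i.+1)) // ltnW.
Qed.

Lemma best_le_Tsc c :
  alpha 1 * B c <= (alpha 1 - alpha l.+1) * T c + n%:R * alpha l.+1 * alpha 1.
Proof.
have le_occ_n : (occ l E c <= n)%N by rewrite /occ -[n in (_ <= n)%N]card_ord max_card.
have := Tsc_le_occ c; have := Tsc_ge0 c.
have : 0 <= alpha l.+1 by apply: alpha_ge0.
rewrite /best natrB //; nra.
Qed.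

Lemma sum_alpha_gt0 : (1 <= l)%N -> 0 < alpha 1 -> 0 < S.
Proof.
move=> l_ge1 alpha1_gt0; rewrite big_ltn //; apply: ltr_pwDl alpha1_gt0 _.
rewrite big_nat_cond sumr_ge0 // => i /andP[/andP[i_ge2 lt_il] _].
exact: alpha_ge0 (ltnW i_ge2) (ltnW (leq_trans lt_il lt_l_m)).
Qed.

Lemma max_score_attained : exists c, M = sc c.
Proof.
have c0 : 'I_m := Ordinal (leq_ltn_trans (leq0n l) lt_l_m).
have [c _ Mc] := @eq_bigmax _ _ _ 0 c0 predT sc isT (fun c _ => score_ge0 c).
by exists c; rewrite -Mc.
Qed.

Section Maximizers.

Variables (a b1 : 'I_m).
Hypothesis a_max : forall c, T c <= T a.
Hypothesis b1_max : forall c, B c <= B b1.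
Hypotheses (n_gt0 : (0 < n)%N) (l_ge1 : (1 <= l)%N) (alpha1_gt0 : 0 < alpha 1).

Lemma sum_alpha_le_Tsc_max : n%:R * S <= m%:R * T a.
Proof.
by rewrite -sum_Tsc mulr_natl -[m in _ *+ m]card_ord -sumr_const ler_sum.
Qed.

Lemma Tsc_max_gt0 : 0 < T a.
Proof.
have nS_gt0 : 0 < n%:R * S by rewrite mulr_gt0 ?ltr0n ?sum_alpha_gt0.
rewrite lt_def Tsc_ge0 andbT; apply/eqP => Ta0.
by move: (lt_le_trans nS_gt0 sum_alpha_le_Tsc_max); rewrite Ta0 mulr0 ltxx.
Qed.

Lemma max_score_gt0 : 0 < M.
Proof.
apply: (lt_le_trans Tsc_max_gt0); apply: le_trans (Tsc_le_score a) _.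
exact: le_bigmax.
Qed.

Lemma best_max_gt0 : 0 < B b1.
Proof. exact: lt_le_trans Tsc_max_gt0 (le_trans (Tsc_le_best a) (b1_max a)). Qed.

Lemma max_score_le_best : M <= B b1.
Proof.
apply: bigmax_le => [|c _]; first exact: le_trans (Tsc_ge0 b1) (Tsc_le_best b1).
exact: le_trans (score_le_best c) (b1_max c).
Qed.

Lemma approx_ratio_le : approx_ratio m alpha l <= T a / B b1.
Proof.
have Ta_gt0 := Tsc_max_gt0.
have Bb1_gt0 := best_max_gt0.
have S_gt0 := sum_alpha_gt0 l_ge1 alpha1_gt0.
have b_ge0 : 0 <= alpha l.+1 by apply: alpha_ge0.
have b_le : alpha l.+1 <= alpha 1 by apply: alpha_le.
have n_gt0R : 0 < n%:R :> R by rewrite ltr0n.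
have nS_le := sum_alpha_le_Tsc_max.
have m_gt0 : 0 < m%:R :> R.
  by rewrite lt_def ler0n andbT; apply: contraTN nS_le => /eqP->; rewrite mul0r -ltNge mulr_gt0.
have best_b1_le : alpha 1 * B b1 <= (alpha 1 - alpha l.+1) * T a + n%:R * alpha l.+1 * alpha 1.
  apply: le_trans (best_le_Tsc b1) _; rewrite lerD2r ler_wpM2l ?subr_ge0 //.
rewrite /approx_ratio; set D := _ + _.
have hD : alpha 1 * D = m%:R * alpha l.+1 * alpha 1 + (alpha 1 - alpha l.+1) * S.
  by rewrite /D; field; rewrite lt0r_neq0.
have D_gt0 : 0 < D.
  rewrite -(pmulr_rgt0 _ alpha1_gt0) hD.
  have [b_gt0|b_le0] := ltrP 0 (alpha l.+1).
    apply: ltr_pwDl; first exact: mulr_gt0 (mulr_gt0 m_gt0 b_gt0) alpha1_gt0.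
    by rewrite mulr_ge0 // ?subr_ge0 // ltW.
  have -> : alpha l.+1 = 0 by apply/le_anti; rewrite b_le0 b_ge0.
  by rewrite mulr0 mul0r add0r subr0 mulr_gt0.
rewrite ler_pdivrMr // mulrAC ler_pdivlMr // -(@ler_pM2l _ (alpha 1)) //.
rewrite [X in _ <= X]mulrCA hD.
have : 0 <= alpha l.+1 * alpha 1 by rewrite mulr_ge0 // ltW.
nra.
Qed.

Lemma ratio_le_score_a : T a / B b1 <= sc a / M.
Proof.
exact: ler_pdiv (Tsc_ge0 a) (Tsc_le_score a) max_score_gt0 max_score_le_best.
Qed.

Lemma ratio_le_score_b1 b2 : (forall c, c != b1 -> B c <= B b2) ->
  T a / B b1 <= T b1 / B b2 -> T a / B b1 <= sc b1 / M.
Proof.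
move=> b2_max le_ratio; have M_gt0 := max_score_gt0.
have [c Mc] := max_score_attained; have [c_b1|c_neq] := eqVneq c b1.
  have M_b1 : M = sc b1 by rewrite Mc c_b1.
  rewrite -M_b1 divff ?lt0r_neq0 // ler_pdivrMr ?best_max_gt0 // mul1r.
  exact: le_trans (Tsc_le_best a) (b1_max a).
apply: le_trans le_ratio _; have [B2_gt0|B2_le0] := ltrP 0 (B b2).
  apply: ler_pdiv (Tsc_ge0 b1) (Tsc_le_score b1) M_gt0 _.
  by rewrite Mc; apply: le_trans (score_le_best c) (b2_max c c_neq).
apply: (@le_trans _ _ 0); first by rewrite mulr_ge0_le0 ?Tsc_ge0 ?invr_le0.
exact: divr_ge0 (score_ge0 b1) (ltW M_gt0).
Qed.

End Maximizers.

End TruncatedBallots.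

Theorem theorem4 (R : realFieldType) (n m l : nat) (alpha : nat -> R)
  (Hm : (2 <= m)%N) (Hl1 : (1 <= l)%N) (Hlm : (l < m)%N) (Hn : (0 < n)%N)
  (Hmono : forall i : nat, (1 <= i)%N -> (i < m)%N -> alpha i.+1 <= alpha i)
  (Hlast : alpha m = 0) (Hpos : 0 < alpha 1%N)
  (E : 'I_n -> {perm 'I_m}) (w : 'I_m) :
  alg_output alpha l E w ->
  approx_ratio m alpha l <= score alpha E w / max_score alpha E.
Proof.
move=> [a [b1 [b2 [a_max [b1_max [_ [b2_max ->]]]]]]].
have {}a_max c : Tsc alpha l E c <= Tsc alpha l E a by rewrite -!(worstE l E Hlast).
apply: le_trans (approx_ratio_le Hmono Hlast Hlm a_max b1_max Hn Hl1 Hpos) _.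
rewrite !(worstE l E Hlast).
case: (lerP (Tsc alpha l E b1 / best alpha l E b2) (Tsc alpha l E a / best alpha l E b1))
  => [_|/ltW lt_ratio].
  exact: (ratio_le_score_a Hmono Hlast Hlm a_max b1_max Hn Hl1 Hpos).
exact: (ratio_le_score_b1 Hmono Hlast Hlm a_max b1_max Hn Hl1 Hpos b2_max lt_ratio).
Qed.
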